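(* Let $E=\mathcal O_{\mathbb P^1}(a)\oplus\mathcal O_{\mathbb P^1}(b)$ with $a,b\ge1$. Then $\mathrm{Gr}_2(H^0(E))\cap\mathbb{P}K^\perp$ is a transversal intersection if and only if $a=b=1$.
   Context: $K^\perp:=\ker(\det:\bigwedge^2H^0(E)\to H^0(\det E))$, and $\mathrm{Gr}_2(H^0(E))\subset\mathbb{P}(\bigwedge^2H^0(E))$ is the Plücker embedding. Two smooth subvarieties $S_1,S_2\subset\mathbb P^N$ intersect transversely if $T_pS_1+T_pS_2=T_p\mathbb P^N$ for every $p\in S_1\cap S_2$. *)

From HB Require Import structures.
From mathcomp Require Import all_boot all_order all_algebra.
Set Implicit Arguments. Unset Strict Implicit. Unset Printing Implicit Defensive.
Import Order.TTheory GRing.Theory Num.Theory.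
Local Open Scope ring_scope.

(* H^0(O(a)) is identified (dehomogenizing y = 1) with polynomials of degree
   <= a, with basis X^0, ..., X^a.  Hence H^0(E) = F^(a+1) x F^(b+1), encoded
   as row vectors 'rV[F]_(a.+1 + b.+1): the first block holds the coefficients
   of the O(a)-component, the second block those of the O(b)-component. *)
Notation H0E F a b := ('rV[F]_(a.+1 + b.+1)) (only parsing).

Definition sec1 (F : fieldType) (a b : nat) (u : H0E F a b) : {poly F} :=
  \poly_(i < a.+1) u 0 (lshift b.+1 (@inord a i)).
Definition sec2 (F : fieldType) (a b : nat) (u : H0E F a b) : {poly F} :=
  \poly_(j < b.+1) u 0 (rshift a.+1 (@inord b j)).

(* The exterior square  /\^2 V  of V = F^n is realized as the space of
   alternating n x n matrices, with  u /\ v := u^T v - v^T u. *)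
Definition alternating (F : fieldType) (n : nat) (w : 'M[F]_n) : Prop :=
  (forall i j, w i j = - w j i) /\ (forall i, w i i = 0).

Definition wedge (F : fieldType) (n : nat) (u v : 'rV[F]_n) : 'M[F]_n :=
  u^T *m v - v^T *m u.

(* det : /\^2 H^0(E) -> H^0(det E) = H^0(O(a+b)) (polynomials of degree
   <= a+b): the linear map with  det (s /\ t) = s_1 t_2 - s_2 t_1
   (see lemma-free remark: detE (wedge s t) = sec1 s * sec2 t - sec2 s * sec1 t). *)
Definition detE (F : fieldType) (a b : nat) (w : 'M[F]_(a.+1 + b.+1)) : {poly F} :=
  \sum_(i < a.+1) \sum_(j < b.+1)
     w (lshift b.+1 i) (rshift a.+1 j) *: 'X^(i + j).

(* Affine cone over P K^perp : the kernel of det inside /\^2 H^0(E). *)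
Definition Kperp (F : fieldType) (a b : nat) (w : 'M[F]_(a.+1 + b.+1)) : Prop :=
  alternating w /\ detE w = 0.

(* A point of Gr_2(H^0(E)) in the Plücker embedding is [s /\ t] with s, t
   linearly independent.  The affine-cone tangent space of the Grassmannian at
   s /\ t is the image of the differential of (u,v) |-> u /\ v at (s,t), i.e.
   { h /\ t + s /\ k }; that of the linear space P K^perp is K^perp.
   Transversality at [s /\ t] (T Gr + T PK^perp = T P(/\^2 H^0 E)) is
   equivalent to: the two affine-cone tangent spaces span /\^2 H^0(E). *)
Definition transversal_at (F : fieldType) (a b : nat) (s t : H0E F a b) : Prop :=
  forall w : 'M[F]_(a.+1 + b.+1), alternating w ->
    exists (h k : H0E F a b) (kap : 'M[F]_(a.+1 + b.+1)),
      @Kperp F a b kap /\ w = wedge h t + wedge s k + kap.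

Definition GrK_transversal (F : fieldType) (a b : nat) : Prop :=
  forall s t : H0E F a b,
    \rank (col_mx s t) = 2%N -> detE (wedge s t) = 0 -> @transversal_at F a b s t.

From HB Require Import structures.
From mathcomp Require Import all_boot all_order all_algebra ring.
Set Implicit Arguments. Unset Strict Implicit. Unset Printing Implicit Defensive.
Import Order.TTheory GRing.Theory Num.Theory.
Local Open Scope ring_scope.

(* Transversality at [s /\ t] says that det maps the tangent directions
   h /\ t + s /\ k onto H^0(O(a+b)); as det (h /\ t) = h1 t2 - h2 t1, the image
   is spanned by the products of s1, s2, t1, t2 with sections of O(a) or O(b).
   If a >= 2, the sections y^a and x y^(a-1) of the summand O(a) give a point
   of the intersection where s and t vanish at (1:0), so the image misses
   x^(a+b); likewise if b >= 2.  If a = b = 1, a Plucker relation shows that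
   det (s /\ t) = 0 forces s1, t1 or s2, t2 to be independent linear forms,
   and two independent linear forms generate all quadrics. *)

Lemma ord_pair_below_max n : (1 < n)%N ->
  exists i j : 'I_n.+1, [/\ i != j, ord_max != i & ord_max != j].
Proof.
move=> n_gt1; exists ord0, (inord 1).
rewrite -!val_eqE /= inordK; last exact: ltnW.
by split; rewrite // neq_ltn ?n_gt1 ?(ltnW n_gt1) orbT.
Qed.

Lemma size2_polyE (F : fieldType) (p : {poly F}) :
  (size p <= 2)%N -> p = (p`_0)%:P + (p`_1)%:P * 'X.
Proof.
move=> sp; apply/polyP => -[|[|i]];
  rewrite coefD coefC coefCM coefX ?mulr0 ?mulr1 ?addr0 ?add0r //.
by rewrite nth_default // (leq_trans sp).
Qed.

Lemma size3_polyE (F : fieldType) (p : {poly F}) :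
  (size p <= 3)%N -> p = (p`_0)%:P + (p`_1)%:P * 'X + (p`_2)%:P * 'X^2.
Proof.
move=> sp; apply/polyP => -[|[|[|i]]];
  rewrite !coefD coefC !coefCM coefX coefXn ?mulr0 ?mulr1 ?addr0 ?add0r //.
by rewrite nth_default // (leq_trans sp).
Qed.

Lemma linear_bezout (F : fieldType) (f g c : {poly F}) :
  (size f <= 2)%N -> (size g <= 2)%N -> f`_0 * g`_1 - g`_0 * f`_1 != 0 ->
  (size c <= 3)%N ->
  exists p q : {poly F}, [/\ (size p <= 2)%N, (size q <= 2)%N & c = p * f + q * g].
Proof.
move=> sf sg + sc; rewrite (size3_polyE sc) {3}(size2_polyE sf) {3}(size2_polyE sg).
move: (c`_0) (c`_1) (c`_2) (f`_0) (f`_1) (g`_0) (g`_1) => c0 c1 c2 f0 f1 g0 g1 d0.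
have size_lin (x y : F) : (size (x%:P + y%:P * 'X)%R <= 2)%N.
  rewrite (leq_trans (size_polyD _ _)) // geq_max size_polyC (leq_trans (leq_b1 _)) //.
  by rewrite mul_polyC (leq_trans (size_scale_leq _ _)) // size_polyX.
have lin_comb (P0 P1 Q0 Q1 : F) : c0 = P0 * f0 + Q0 * g0 ->
    c1 = P0 * f1 + P1 * f0 + Q0 * g1 + Q1 * g0 -> c2 = P1 * f1 + Q1 * g1 ->
    c0%:P + c1%:P * 'X + c2%:P * 'X^2 =
      (P0%:P + P1%:P * 'X) * (f0%:P + f1%:P * 'X)
    + (Q0%:P + Q1%:P * 'X) * (g0%:P + g1%:P * 'X).
  by move=> -> -> ->; ring.
pose d := f0 * g1 - g0 * f1.
(* Imposing P1 * f0 + Q1 * g0 = 0 splits the system of lin_comb into two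
   systems with matrix [f0 g0; f1 g1], solved by Cramer's rule. *)
exists (((c0 * g1 - c1 * g0) / d)%:P + (- c2 * g0 / d)%:P * 'X).
exists (((c1 * f0 - c0 * f1) / d)%:P + (c2 * f0 / d)%:P * 'X).
split; rewrite ?size_lin //.
by apply: lin_comb; rewrite /d; field.
Qed.

Section Wedge.
Variables (F : fieldType) (n : nat).
Implicit Types (u v : 'rV[F]_n) (w : 'M[F]_n).

Lemma wedgeE u v i j : wedge u v i j = u 0 i * v 0 j - v 0 i * u 0 j.
Proof. by rewrite /wedge !mxE !big_ord1 !mxE. Qed.

Lemma wedge_alternating u v : alternating (wedge u v).
Proof. by split=> [i j|i]; rewrite !wedgeE; ring. Qed.

Lemma alternatingB w1 w2 : alternating w1 -> alternating w2 -> alternating (w1 - w2).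
Proof.
move=> [w1N w1d] [w2N w2d]; split=> [i j|i]; rewrite !mxE.
  by rewrite w1N w2N opprD.
by rewrite w1d w2d subrr.
Qed.

Lemma wedge_plucker u v i j k l :
  wedge u v i j * wedge u v k l - wedge u v i k * wedge u v j l
    + wedge u v i l * wedge u v j k = 0.
Proof. rewrite !wedgeE; ring. Qed.

Lemma wedge_neq0 u v : \rank (col_mx u v) = 2%N -> wedge u v != 0.
Proof.
move=> rk; have /row_freeP [B uvB] : row_free (col_mx u v) by rewrite /row_free rk.
move: uvB; rewrite -[B]hsubmxK mul_col_mx !mul_mx_row scalar_mx_block.
case/eq_col_mx => /eq_row_mx [uB1 uB2] /eq_row_mx [vB1 vB2].
apply: contra_neq (@oner_neq0 'M[F]_1) => uv0.
have : (lsubmx B)^T *m wedge u v *m rsubmx B = 1.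
  rewrite /wedge mulmxBr mulmxBl !mulmxA -!trmx_mul -!mulmxA uB1 vB2 uB2 vB1.
  by rewrite trmx1 trmx0 mulmx1 mul0mx subr0.
by rewrite uv0 mulmx0 mul0mx.
Qed.

Lemma rank_col_delta (p q : 'I_n) : p != q ->
  \rank (col_mx (delta_mx 0 p : 'rV[F]_n) (delta_mx 0 q : 'rV[F]_n)) = 2%N.
Proof.
move=> pq; apply/eqP; rewrite -[2%N]/(1 + 1)%N; apply/row_freeP.
exists (row_mx (delta_mx p 0) (delta_mx q 0)).
have qp : q != p by rewrite eq_sym.
rewrite mul_col_row !mul_delta_mx !mul_delta_mx_0 //.
by rewrite [delta_mx 0 0]mx11_scalar !mxE eqxx -scalar_mx_block.
Qed.

End Wedge.

Fact detE_is_zmod_morphism (F : fieldType) (a b : nat) :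
  zmod_morphism (@detE F a b).
Proof.
move=> w1 w2; rewrite /detE -sumrB; apply: eq_bigr => i _.
by rewrite -sumrB; apply: eq_bigr => j _; rewrite !mxE scalerBl.
Qed.

HB.instance Definition _ (F : fieldType) (a b : nat) :=
  GRing.isZmodMorphism.Build _ _ (@detE F a b) (@detE_is_zmod_morphism F a b).

Section Transversality.
Variables (F : fieldType) (a b : nat).
Implicit Types (s t h k : H0E F a b) (w : 'M[F]_(a.+1 + b.+1)) (p q : {poly F}).

Lemma transversal_atE s t :
  transversal_at s t <->
  forall w, alternating w -> exists h k, detE w = detE (wedge h t) + detE (wedge s k).
Proof.
split=> [T w /T [h [k [kap [[_ kap0] ->]]]] | T w /[dup] /T [h [k dw]] altw].
  by exists h, k; rewrite 2!raddfD /= kap0 addr0.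
exists h, k, (w - wedge h t - wedge s k).
split; last by rewrite addrC -[w - _ - _]addrA -opprD subrK.
split; first by do 2 apply: alternatingB _ (wedge_alternating _ _).
by rewrite 2!raddfB /= dw addrAC addrK subrr.
Qed.

Lemma coef_detE_top w :
  (detE w)`_(a + b) = w (lshift b.+1 ord_max) (rshift a.+1 ord_max).
Proof.
rewrite /detE coef_sum big_ord_recr /= big1 ?add0r => [|i _].
  rewrite coef_sum big_ord_recr /= big1 ?add0r => [|j _].
    by rewrite coefZ coefXn eqxx mulr1.
  by rewrite coefZ coefXn eqn_add2l gtn_eqF ?mulr0.
rewrite coef_sum big1 // => j _; rewrite coefZ coefXn gtn_eqF ?mulr0 //.
by rewrite -addSn leq_add // -ltnS.
Qed.

Lemma size_detE w : (size (detE w) <= (a + b).+1)%N.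
Proof.
rewrite /detE (leq_trans (size_sum _ _ _)) //; apply/bigmax_leqP => i _.
rewrite (leq_trans (size_sum _ _ _)) //; apply/bigmax_leqP => j _.
rewrite (leq_trans (size_scale_leq _ _)) // size_polyXn ltnS.
by rewrite leq_add // -ltnS.
Qed.

Lemma detE_wedge s t : detE (wedge s t) = sec1 s * sec2 t - sec2 s * sec1 t.
Proof.
have sec1_sec2 u v : sec1 u * sec2 v = \sum_(i < a.+1) \sum_(j < b.+1)
    (u 0 (lshift b.+1 i) * v 0 (rshift a.+1 j)) *: 'X^(i + j).
  rewrite /sec1 /sec2 !poly_def mulr_suml; apply: eq_bigr => i _.
  rewrite mulr_sumr; apply: eq_bigr => j _.
  by rewrite !inord_val -scalerAl -scalerAr scalerA exprD.
rewrite [sec2 s * _]mulrC !sec1_sec2 /detE -sumrB; apply: eq_bigr => i _.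
by rewrite -sumrB; apply: eq_bigr => j _; rewrite wedgeE scalerBl.
Qed.

Definition sec_of p q : H0E F a b := row_mx (poly_rV p) (poly_rV q).

Lemma sec1_of p q : (size p <= a.+1)%N -> sec1 (sec_of p q) = p.
Proof.
move=> sp; apply/polyP => i; rewrite coef_poly; case: ltnP => [ltia | leai].
  by rewrite row_mxEl mxE inordK.
by rewrite nth_default // (leq_trans sp).
Qed.

Lemma sec2_of p q : (size q <= b.+1)%N -> sec2 (sec_of p q) = q.
Proof.
move=> sq; apply/polyP => j; rewrite coef_poly; case: ltnP => [ltjb | lebj].
  by rewrite row_mxEr mxE inordK.
by rewrite nth_default // (leq_trans sq).
Qed.

Lemma tangent_sec1 s t p q : (size p <= b.+1)%N -> (size q <= b.+1)%N ->
  exists h k, p * sec1 s + q * sec1 t = detE (wedge h t) + detE (wedge s k).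
Proof.
move=> sp sq; exists (sec_of 0 (- q)), (sec_of 0 p).
by rewrite !detE_wedge !sec1_of ?sec2_of ?size_poly0 ?size_polyN //; ring.
Qed.

Lemma tangent_sec2 s t p q : (size p <= a.+1)%N -> (size q <= a.+1)%N ->
  exists h k, p * sec2 s + q * sec2 t = detE (wedge h t) + detE (wedge s k).
Proof.
move=> sp sq; exists (sec_of q 0), (sec_of (- p) 0).
by rewrite !detE_wedge !sec1_of ?sec2_of ?size_poly0 ?size_polyN //; ring.
Qed.

(* The coefficients of x^a and x^b are the values of the two components at
   the point (1:0) of P^1. *)
Definition vanishes_at_infinity s :=
  s 0 (lshift b.+1 ord_max) = 0 /\ s 0 (rshift a.+1 ord_max) = 0.

Lemma vanishing_at_infinity_not_transversal s t :
  vanishes_at_infinity s -> vanishes_at_infinity t -> ~ transversal_at s t.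
Proof.
move=> [sL sR] [tL tR] /transversal_atE.
pose L := lshift b.+1 (@ord_max a); pose R := rshift a.+1 (@ord_max b).
move=> /(_ _ (wedge_alternating (delta_mx 0 L) (delta_mx 0 R))) [h [k]].
move/(congr1 (coefp (a + b))); rewrite /= coefD !coef_detE_top !wedgeE sL sR tL tR.
rewrite !mxE !eqxx eq_lrshift eq_rlshift /=.
by rewrite !mulr0 !mul0r !subrr addr0 mulr1 subr0 => /eqP; rewrite oner_eq0.
Qed.

Lemma sec2_delta_lshift (i : 'I_a.+1) :
  sec2 (delta_mx 0 (lshift b.+1 i) : H0E F a b) = 0.
Proof. by apply/polyP => j; rewrite coef_poly mxE eq_rlshift andbF coef0 if_same. Qed.

Lemma sec1_delta_rshift (j : 'I_b.+1) :
  sec1 (delta_mx 0 (rshift a.+1 j) : H0E F a b) = 0.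
Proof. by apply/polyP => i; rewrite coef_poly mxE eq_lrshift andbF coef0 if_same. Qed.

Lemma GrK_transversal_leq1l : GrK_transversal F a b -> (a <= 1)%N.
Proof.
rewrite leqNgt => T; apply/negP => /ord_pair_below_max [i [j [ij iL jL]]].
pose e (m : 'I_(a.+1 + b.+1)) : H0E F a b := delta_mx 0 m.
apply: (@vanishing_at_infinity_not_transversal (e (lshift _ i)) (e (lshift _ j))).
- by split; rewrite !mxE ?eq_lshift ?(negbTE iL) ?eq_rlshift andbF.
- by split; rewrite !mxE ?eq_lshift ?(negbTE jL) ?eq_rlshift andbF.
apply: T; first by apply: rank_col_delta; rewrite eq_lshift.
by rewrite detE_wedge !sec2_delta_lshift mulr0 mul0r subrr.
Qed.

Lemma GrK_transversal_leq1r : GrK_transversal F a b -> (b <= 1)%N.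
Proof.
rewrite leqNgt => T; apply/negP => /ord_pair_below_max [i [j [ij iR jR]]].
pose e (m : 'I_(a.+1 + b.+1)) : H0E F a b := delta_mx 0 m.
apply: (@vanishing_at_infinity_not_transversal (e (rshift _ i)) (e (rshift _ j))).
- by split; rewrite !mxE ?eq_rshift ?(negbTE iR) ?eq_lrshift andbF.
- by split; rewrite !mxE ?eq_rshift ?(negbTE jR) ?eq_lrshift andbF.
apply: T; first by apply: rank_col_delta; rewrite eq_rshift.
by rewrite detE_wedge !sec1_delta_rshift mulr0 mul0r subrr.
Qed.

End Transversality.

Section LinearForms.
Variable F : fieldType.

Local Notation l0 := (lshift 2 (ord0 : 'I_2)).
Local Notation l1 := (lshift 2 (lift ord0 ord0 : 'I_2)).
Local Notation r0 := (rshift 2 (ord0 : 'I_2)).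
Local Notation r1 := (rshift 2 (lift ord0 ord0 : 'I_2)).

Lemma detE11_eq0 (w : 'M[F]_(2 + 2)) :
  detE w = 0 -> [/\ w l0 r0 = 0, w l0 r1 + w l1 r0 = 0 & w l1 r1 = 0].
Proof.
move=> dw; have c i := congr1 (coefp i) dw.
move: (c 0%N) (c 1%N) (c 2%N); rewrite /= /detE !big_ord_recl !big_ord0 /=.
by rewrite !coefD !coefZ !coefXn !coef0 /= !mulr1 !mulr0 !addr0 !add0r.
Qed.

Lemma alternating4_eq0 (w : 'M[F]_(2 + 2)) : alternating w ->
  w l0 l1 = 0 -> w l0 r0 = 0 -> w l0 r1 = 0 -> w l1 r0 = 0 -> w l1 r1 = 0 ->
  w r0 r1 = 0 -> w = 0.
Proof.
move=> [wN wd] e01 e02 e03 e12 e13 e23; apply/matrixP => i j; rewrite mxE.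
have idx (m : 'I_(2 + 2)) : m \in [:: l0; l1; r0; r1].
  by case: m => [[|[|[|[|//]]]] ?]; rewrite !inE -!val_eqE.
move: (idx i) (idx j); rewrite !inE => /or4P[]/eqP-> /or4P[]/eqP->;
  by rewrite ?wd ?e01 ?e02 ?e03 ?e12 ?e13 ?e23 // wN ?e01 ?e02 ?e03 ?e12 ?e13 ?e23 oppr0.
Qed.

Lemma sec_minors_neq0 (s t : H0E F 1 1) :
  \rank (col_mx s t) = 2%N -> detE (wedge s t) = 0 ->
  (sec1 s)`_0 * (sec1 t)`_1 - (sec1 t)`_0 * (sec1 s)`_1 != 0 \/
  (sec2 s)`_0 * (sec2 t)`_1 - (sec2 t)`_0 * (sec2 s)`_1 != 0.
Proof.
move=> /wedge_neq0 st0 /detE11_eq0 [e02 e0312 e13].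
rewrite !coef_poly /= (inord_val (ord0 : 'I_2)) (inord_val (lift ord0 ord0 : 'I_2)).
rewrite -!wedgeE.
have [e01|] := eqVneq (wedge s t l0 l1) 0; last by left.
have [e23|] := eqVneq (wedge s t r0 r1) 0; last by right.
have e12 : wedge s t l1 r0 = - wedge s t l0 r1.
  by apply/eqP; rewrite -addr_eq0 addrC e0312.
have e03 : wedge s t l0 r1 = 0.
  have := wedge_plucker s t l0 l1 r0 r1.
  rewrite e01 e23 e02 e13 e12 !mul0r subrr add0r mulrN => /eqP.
  by rewrite oppr_eq0 mulf_eq0 orbb => /eqP.
move: e12; rewrite e03 oppr0 => e12.
by case/eqP: st0; apply: alternating4_eq0 => //; apply: wedge_alternating.
Qed.

End LinearForms.

Lemma GrK_transversal11 (F : fieldType) : GrK_transversal F 1 1.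
Proof.
move=> s t rk dst; apply/transversal_atE => w _.
have [minor1|minor2] := sec_minors_neq0 rk dst.
  have [p [q [sp sq ->]]] :=
    linear_bezout (size_poly _ _) (size_poly _ _) minor1 (size_detE w).
  exact: tangent_sec1.
have [p [q [sp sq ->]]] :=
  linear_bezout (size_poly _ _) (size_poly _ _) minor2 (size_detE w).
exact: tangent_sec2.
Qed.

Theorem proposition5p6 (F : closedFieldType) (hF : [pchar F] =i pred0)
    (a b : nat) (ha : (1 <= a)%N) (hb : (1 <= b)%N) :
  GrK_transversal F a b <-> (a = 1%N /\ b = 1%N).
Proof.
split=> [T | [-> ->]]; last exact: GrK_transversal11.
by split; apply/anti_leq;
  rewrite ?ha ?hb ?(GrK_transversal_leq1l T) ?(GrK_transversal_leq1r T).
Qed.
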